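(* Let $A$ be a commutative unitary ring. The following are equivalent: (i) $A$ is a BL-ring; (ii) $(K:[I\otimes(J:I)])=(K:I)+(K:J)$ for all ideals $I,J,K$ of $A$.
   Context: For a commutative unitary ring $A$, $Id(A)$ is the set of ideals. For $I,J\in Id(A)$: $I+J=\{i+j: i\in I,j\in J\}$, $I\otimes J=\{\sum_{k=1}^n i_kj_k: i_k\in I, j_k\in J\}$ (ideal product), $(I:J)=\{x\in A: xJ\subseteq I\}$. Then $(Id(A),\cap,+,\otimes,\rightarrow,\{0\},A)$ with $I\rightarrow J=(J:I)$ and order $\subseteq$ is a residuated lattice. A residuated lattice is a bounded lattice with a commutative ordered monoid operation $\odot$ with unit $1$ and an operation $\rightarrow$ with $z\leq x\rightarrow y$ iff $x\odot z\leq y$; a BL-algebra is a residuated lattice satisfying $(x\rightarrow y)\vee(y\rightarrow x)=1$ and $x\odot(x\rightarrow y)=x\wedge y$. A BL-ring is a commutative unitary ring $A$ whose residuated lattice of ideals $Id(A)$ is a BL-algebra. *)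

(* Ideals of a commutative unitary ring A are represented as
   predicates A -> Prop satisfying the ideal axioms; ideal equality is
   extensional (pointwise <->). *)
From mathcomp Require Import all_boot all_algebra.
Set Implicit Arguments. Unset Strict Implicit. Unset Printing Implicit Defensive.
Import GRing.Theory.
Local Open Scope ring_scope.

Section IdealOps.
Variable A : comPzRingType.

Definition is_ideal (I : A -> Prop) : Prop :=
  [/\ I 0, (forall x y, I x -> I y -> I (x + y)) & (forall a x, I x -> I (a * x))].

Definition seteq (I J : A -> Prop) : Prop := forall x, I x <-> J x.

Definition idT : A -> Prop := fun _ => True.

Definition id_cap (I J : A -> Prop) : A -> Prop := fun x => I x /\ J x.

Definition id_sum (I J : A -> Prop) : A -> Prop :=
  fun x => exists i j, [/\ I i, J j & x = i + j].

Definition id_prod (I J : A -> Prop) : A -> Prop :=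
  fun x => exists (n : nat) (f g : 'I_n -> A),
    [/\ forall k, I (f k), forall k, J (g k) & x = \sum_(k < n) f k * g k].

Definition id_colon (I J : A -> Prop) : A -> Prop :=
  fun x => forall j, J j -> I (x * j).

(* residuum in Id(A): I -> J = (J : I) *)
Definition id_impl (I J : A -> Prop) : A -> Prop := id_colon J I.

(* Id(A) is always a residuated lattice (join = +, meet = ∩, ⊙ = ⊗, top = A);
   it is a BL-algebra iff in addition prelinearity and divisibility hold. *)
Definition BL_ring : Prop :=
  forall I J : A -> Prop, is_ideal I -> is_ideal J ->
    seteq (id_sum (id_impl I J) (id_impl J I)) idT /\
    seteq (id_prod I (id_impl I J)) (id_cap I J).

End IdealOps.

(* Divisibility says that I ⊗ (J:I) = I ∩ J, and prelinearity gives
   1 = a + b with a ∈ (J:I) and b ∈ (I:J); splitting x = x a + x b then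
   turns (K : I ∩ J) into (K:I) + (K:J).  Conversely, for K = I ∩ J and for
   K = I ⊗ (J:I) the left-hand side of (ii) contains 1, and a decomposition
   1 = a + b on the right-hand side yields prelinearity and divisibility. *)
From mathcomp Require Import all_boot all_algebra.
Import GRing.Theory.
Local Open Scope ring_scope.
Set Implicit Arguments.
Unset Strict Implicit.

Section IdealLattice.
Variable A : comPzRingType.
Implicit Types (I J K L : A -> Prop) (x a : A).

Definition id_le I J : Prop := forall x, I x -> J x.

Lemma seteq_le I J : seteq I J <-> id_le I J /\ id_le J I.
Proof. by split=> [E | [IJ JI] x]; [split=> x /E | split=> [/IJ | /JI]]. Qed.

Lemma ideal_mulr I x a : is_ideal I -> I x -> I (x * a).
Proof. by case=> _ _ IM Ix; rewrite mulrC; apply: IM. Qed.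

Lemma ideal_sum_closed I n (F : 'I_n -> A) :
  is_ideal I -> (forall k, I (F k)) -> I (\sum_(k < n) F k).
Proof. by case=> I0 ID _ IF; apply: (big_ind I) => // k _; apply: IF. Qed.

Lemma is_ideal_cap I J : is_ideal I -> is_ideal J -> is_ideal (id_cap I J).
Proof.
move=> [I0 ID IM] [J0 JD JM]; split=> [// | x y [? ?] [? ?] | a x [? ?]].
- by split; [apply: ID | apply: JD].
- by split; [apply: IM | apply: JM].
Qed.

Lemma is_ideal_colon K I : is_ideal K -> is_ideal (id_colon K I).
Proof.
move=> [K0 KD KM]; split=> [j _ | x y Hx Hy j Ij | a x Hx j Ij].
- by rewrite mul0r.
- by rewrite mulrDl; apply: KD; [apply: Hx | apply: Hy].
- by rewrite -mulrA; apply: KM; apply: Hx.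
Qed.

Lemma is_ideal_prod I J : is_ideal I -> is_ideal J -> is_ideal (id_prod I J).
Proof.
move=> [I0 _ IM] [J0 _ _]; split.
- by exists 0%N, (fun=> 0), (fun=> 0); rewrite big_ord0.
- move=> _ _ [n [f [g [If Jg ->]]]] [m [f' [g' [If' Jg' ->]]]].
  pose glue (h : 'I_n -> A) (h' : 'I_m -> A) k :=
    match split k with inl i => h i | inr j => h' j end.
  exists (n + m)%N, (glue f f'), (glue g g').
  split=> [k | k | ]; rewrite /glue; [by case: split | by case: split |].
  by rewrite big_split_ord; congr (_ + _); apply: eq_bigr => i _;
    rewrite ?(unsplitK (inl i)) ?(unsplitK (inr i)).
- move=> a _ [n [f [g [If Jg ->]]]].
  exists n, (fun k => a * f k), g; split=> // [k | ]; first exact: IM.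
  by rewrite mulr_sumr; apply: eq_bigr => k _; rewrite mulrA.
Qed.

Lemma id_sum_le I J K :
  is_ideal K -> id_le I K -> id_le J K -> id_le (id_sum I J) K.
Proof. by case=> _ KD _ IK JK _ [i [j [Ii Jj ->]]]; apply: KD; [apply: IK | apply: JK]. Qed.

Lemma id_sum_mono I I' J J' :
  id_le I I' -> id_le J J' -> id_le (id_sum I J) (id_sum I' J').
Proof. by move=> II' JJ' _ [i [j [Ii Jj ->]]]; exists i, j; split; [apply: II' | apply: JJ' |]. Qed.

Lemma id_le_cap I J K : id_le K I -> id_le K J -> id_le K (id_cap I J).
Proof. by move=> KI KJ x Kx; split; [apply: KI | apply: KJ]. Qed.

Lemma id_colon_monol K L I : id_le K L -> id_le (id_colon K I) (id_colon L I).
Proof. by move=> KL x Hx i Ii; apply/KL/Hx. Qed.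

Lemma id_colon_antir K I J : id_le I J -> id_le (id_colon K J) (id_colon K I).
Proof. by move=> IJ x Hx i Ii; apply/Hx/IJ. Qed.

Lemma id_colon1 K L : id_colon K L 1 <-> id_le L K.
Proof. by split=> H x; [move/H; rewrite mul1r | rewrite mul1r; apply: H]. Qed.

Lemma id_sum_full I J :
  is_ideal I -> is_ideal J -> id_sum I J 1 -> seteq (id_sum I J) (@idT A).
Proof.
move=> HI HJ [a [b [Ia Jb E]]] x; split=> // _.
by exists (a * x), (b * x); split; [apply: ideal_mulr | apply: ideal_mulr |
  rewrite -mulrDl -E mul1r].
Qed.

Lemma id_prod_lel I J : is_ideal I -> id_le (id_prod I J) I.
Proof.
move=> HI _ [n [f [g [If _ ->]]]].
by apply: ideal_sum_closed => // k; apply: ideal_mulr.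
Qed.

Lemma id_prod_colon_le I J : is_ideal J -> id_le (id_prod I (id_colon J I)) J.
Proof.
move=> HJ _ [n [f [g [If Jg ->]]]].
by apply: ideal_sum_closed => // k; rewrite mulrC; apply: Jg.
Qed.

Lemma id_prod_colon_le_cap I J :
  is_ideal I -> is_ideal J -> id_le (id_prod I (id_colon J I)) (id_cap I J).
Proof. by move=> HI HJ; apply: id_le_cap; [apply: id_prod_lel | apply: id_prod_colon_le]. Qed.

Lemma id_sum_colon_le_colon_prod I J K :
  is_ideal I -> is_ideal J -> is_ideal K ->
  id_le (id_sum (id_colon K I) (id_colon K J))
        (id_colon K (id_prod I (id_colon J I))).
Proof.
move=> HI HJ HK; apply: id_sum_le; first exact: is_ideal_colon.
- by apply: id_colon_antir; apply: id_prod_lel.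
- by apply: id_colon_antir; apply: id_prod_colon_le.
Qed.

Lemma id_colon_cap_le_sum I J K :
  is_ideal I -> is_ideal J -> id_sum (id_colon J I) (id_colon I J) 1 ->
  id_le (id_colon K (id_cap I J)) (id_sum (id_colon K I) (id_colon K J)).
Proof.
move=> HI HJ [a [b [Ja Ib E]]] x Kx.
exists (x * a), (x * b); split=> [i Ii | j Jj |]; last by rewrite -mulrDr -E mulr1.
- by rewrite -mulrA; apply: Kx; split; [rewrite mulrC; apply: ideal_mulr | apply: Ja].
- by rewrite -mulrA; apply: Kx; split; [apply: Ib | rewrite mulrC; apply: ideal_mulr].
Qed.

Lemma id_cap_le_of_colon_sum1 I J K :
  is_ideal K -> id_sum (id_colon K I) (id_colon K J) 1 -> id_le (id_cap I J) K.
Proof.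
move=> [_ KD _] [a [b [Ka Kb E]]] x [Ix Jx].
by rewrite -[x]mul1r E mulrDl; apply: KD; [apply: Ka | apply: Kb].
Qed.

End IdealLattice.

Theorem corollary3p6 (A : comPzRingType) :
  BL_ring A <->
  (forall I J K : A -> Prop, is_ideal I -> is_ideal J -> is_ideal K ->
     seteq (id_colon K (id_prod I (id_colon J I)))
           (id_sum (id_colon K I) (id_colon K J))).
Proof.
split=> [BL I J K HI HJ HK | H I J HI HJ].
- have [/(_ 1) [_ prelin] /seteq_le [_ div]] := BL I J HI HJ.
  apply/seteq_le; split; last exact: id_sum_colon_le_colon_prod.
  by move=> x /(id_colon_antir div)/(id_colon_cap_le_sum HI HJ (prelin Logic.I)).
- set P := id_prod I (id_colon J I).
  have HP : is_ideal P by apply/is_ideal_prod/is_ideal_colon.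
  have PIJ : id_le P (id_cap I J) by apply: id_prod_colon_le_cap.
  have one_sum K : is_ideal K -> id_le P K -> id_sum (id_colon K I) (id_colon K J) 1.
    by move=> HK PK; apply/(H I J K HI HJ HK)/id_colon1.
  split.
  + apply: id_sum_full; [exact: is_ideal_colon | exact: is_ideal_colon |].
    have := one_sum _ (is_ideal_cap HI HJ) PIJ.
    by apply: id_sum_mono; apply: id_colon_monol => x [].
  + apply/seteq_le; split=> //.
    by apply: id_cap_le_of_colon_sum1 => //; apply: one_sum.
Qed.
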